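(* Let $p>3$ be a prime and let $L_1(x),L_2(x),L_3(x)\in\mathbb{F}_{p^r}[x]$ be additive polynomials. If $A(x)=L_1(x)L_2(x)L_3(x)$ is an Alltop polynomial on $\mathbb{F}_{p^r}$, then $L_1(x),L_2(x),L_3(x)$ are all permutation polynomials of $\mathbb{F}_{p^r}$.
   Context: For $f:\mathbb{F}_{p^r}\to\mathbb{F}_{p^r}$ and $a\in\mathbb{F}_{p^r}$, $\Delta_{f,a}(x)=f(x+a)-f(x)$. A function $f$ is planar if for every $a\in\mathbb{F}_{p^r}^*$ the map $x\mapsto\Delta_{f,a}(x)$ is a bijection; $A$ is an Alltop polynomial if $\Delta_{A,a}$ is planar for every $a\in\mathbb{F}_{p^r}^*$. A polynomial $L$ is additive if $L(x+y)=L(x)+L(y)$ for all $x,y\in\mathbb{F}_{p^r}$. *)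

From HB Require Import structures.
From mathcomp Require Import all_boot all_order all_algebra all_field.
Set Implicit Arguments. Unset Strict Implicit. Unset Printing Implicit Defensive.
Import GRing.Theory.
Local Open Scope ring_scope.

Definition delta (F : finFieldType) (f : F -> F) (a : F) : F -> F :=
  fun x => f (x + a) - f x.

Definition planar (F : finFieldType) (f : F -> F) : Prop :=
  forall a : F, a != 0 -> bijective (delta f a).

Definition alltop (F : finFieldType) (A : F -> F) : Prop :=
  forall a : F, a != 0 -> planar (delta A a).

Definition additive_poly (F : finFieldType) (L : {poly F}) : Prop :=
  forall x y : F, L.[x + y] = L.[x] + L.[y].

Definition perm_poly (F : finFieldType) (L : {poly F}) : Prop :=
  bijective (fun x : F => L.[x]).

From HB Require Import structures.
From mathcomp Require Import all_boot all_order all_algebra all_field ring.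
Set Implicit Arguments. Unset Strict Implicit. Unset Printing Implicit Defensive.
Local Open Scope ring_scope.
Import GRing.Theory.

(* If a factor L of A had a nonzero root a, then A would vanish at 0, a, 2a, 3a
   by additivity of L, so the third difference of A with step a would be 0.
   But that third difference is Delta_a(Delta_a A)(a) - Delta_a(Delta_a A)(0),
   which is nonzero because Delta_a A is planar. *)

Lemma planar_delta_neq (F : finFieldType) (f : F -> F) (a : F) :
  planar f -> a != 0 -> delta f a a != delta f a 0.
Proof.
move=> f_planar a_neq0; have delta_inj := bij_inj (f_planar a a_neq0).
by apply: contra_neq a_neq0 => /delta_inj.
Qed.

Lemma alltop_third_difference_neq0 (F : finFieldType) (A : F -> F) (a : F) :
  alltop A -> a != 0 -> A (a *+ 3) - A (a *+ 2) *+ 3 + A a *+ 3 - A 0 != 0.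
Proof.
move=> A_alltop a_neq0.
have -> : A (a *+ 3) - A (a *+ 2) *+ 3 + A a *+ 3 - A 0 =
    delta (delta A a) a a - delta (delta A a) a 0.
  by rewrite /delta !add0r -!mulr2n -mulrSr; ring.
by rewrite subr_eq0 (planar_delta_neq (A_alltop a a_neq0)).
Qed.

Lemma additive_poly0 (F : finFieldType) (L : {poly F}) :
  additive_poly L -> L.[0] = 0.
Proof.
by move=> L_add; apply: (@addrI _ L.[0]); rewrite -L_add !addr0.
Qed.

Lemma additive_polyMn (F : finFieldType) (L : {poly F}) (x : F) (n : nat) :
  additive_poly L -> L.[x *+ n] = L.[x] *+ n.
Proof.
move=> L_add; elim: n => [|n IHn]; first by rewrite !mulr0n additive_poly0.
by rewrite !mulrS L_add IHn.
Qed.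

Lemma additive_perm_poly (F : finFieldType) (L : {poly F}) :
  additive_poly L -> (forall x, L.[x] = 0 -> x = 0) -> perm_poly L.
Proof.
move=> L_add L_ker; apply: injF_bij => x y /= eq_Lxy.
apply/eqP; rewrite -subr_eq0; apply/eqP/L_ker.
by apply: (addIr L.[y]); rewrite -L_add subrK eq_Lxy add0r.
Qed.

Lemma alltop_factor_perm_poly (F : finFieldType) (A : F -> F) (L : {poly F}) :
  alltop A -> additive_poly L -> (forall x, L.[x] = 0 -> A x = 0) ->
  perm_poly L.
Proof.
move=> A_alltop L_add L_div; apply: additive_perm_poly => // a La0.
have A_mult n : A (a *+ n) = 0 by apply: L_div; rewrite additive_polyMn // La0 mul0rn.
have [//|a_neq0] := eqVneq a 0.
have := alltop_third_difference_neq0 A_alltop a_neq0.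
by rewrite !A_mult (A_mult 1) (A_mult 0) !mul0rn !subr0 addr0 eqxx.
Qed.

Theorem theorem3 (p : nat) (F : finFieldType) (L1 L2 L3 : {poly F}) :
  prime p -> (3 < p)%N -> p \in [pchar F] ->
  additive_poly L1 -> additive_poly L2 -> additive_poly L3 ->
  alltop (fun x : F => (L1 * L2 * L3).[x]) ->
  [/\ perm_poly L1, perm_poly L2 & perm_poly L3].
Proof.
move=> _ _ _ L1_add L2_add L3_add A_alltop.
by split; apply: (alltop_factor_perm_poly A_alltop) => // x Lx0;
  rewrite !hornerM Lx0 !(mulr0, mul0r).
Qed.
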